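(* Let $X$ be a spectrally extremal regular graph on $n$ vertices of diameter $d$, with distinct eigenvalues $\theta_0 > \dots > \theta_d$. If the eccentricity of every vertex is $d$ and \[ n \prod_{s=1}^{d} \frac{1}{\theta_0 - \theta_s} = \sum_{r=0}^{d} (-1)^r \prod_{s \neq r} \frac{1}{\theta_r - \theta_s}, \] then $X$ is an antipodal distance-regular graph.
   Context: $X$ is a finite simple connected graph. A graph of diameter $d$ has at least $d+1$ distinct adjacency eigenvalues; it is spectrally extremal if it has exactly $d+1$. The eccentricity of a vertex $u$ is $\max_w d(u,w)$. A partition of $V(X)$ is equitable if the number of neighbours that a vertex $x$ has in a class $C$ depends only on the class containing $x$; these numbers are the parameters of the partition. The distance partition of $u$ is the partition into the sets $\{w : d(u,w)=i\}$. $X$ is distance-regular if the distance partition of every vertex is equitable with parameters independent of the vertex. A distance-regular graph of diameter $d$ is antipodal if the relation ''being at distance $0$ or $d$'' is an equivalence relation on $V(X)$. *)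

From HB Require Import structures.
From mathcomp Require Import all_boot all_order all_algebra.
From mathcomp Require Import algC.
Set Implicit Arguments. Unset Strict Implicit. Unset Printing Implicit Defensive.
Import Order.TTheory GRing.Theory Num.Theory.

Section Graph.
Variables (n : nat) (adj : rel 'I_n).

Definition simple_graph : Prop :=
  (forall x y, adj x y = adj y x) /\ (forall x, ~~ adj x x).

Definition walk (u w : 'I_n) (k : nat) : bool :=
  [exists p : k.-tuple 'I_n, path adj u p && (last u p == w)].

Definition connected : Prop := forall u w, exists k, walk u w k.

(* graph distance: least length of a walk from u to w (a shortest walk has
   length < n, so searching lengths 0..n-1 suffices for connected graphs) *)
Definition dist (u w : 'I_n) : nat := find (walk u w) (iota 0 n).

Definition ecc (u : 'I_n) : nat := \max_(w : 'I_n) dist u w.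

Definition diameter : nat := \max_(u : 'I_n) ecc u.

Definition regular : Prop :=
  exists k, forall x, #|[set y | adj x y]| = k.

(* adjacency matrix (over the algebraic complex numbers; all eigenvalues of
   a real symmetric matrix are real algebraic numbers) *)
Definition adjmx : 'M[algC]_n := \matrix_(i, j) ((adj i j)%:R)%R.

Definition equitable_params (f : 'I_n -> nat) (P : nat -> nat -> nat) : Prop :=
  forall x c, #|[set z | adj x z & f z == c]| = P (f x) c.

Definition equitable (f : 'I_n -> nat) : Prop := exists P, equitable_params f P.

Definition distance_regular : Prop :=
  exists P, forall u, equitable_params (dist u) P.

Definition antipodal : Prop :=
  distance_regular /\
  equivalence_rel (fun x y => (dist x y == 0) || (dist x y == diameter)).

End Graph.

From HB Require Import structures.
From mathcomp Require Import all_boot all_order all_algebra.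
From mathcomp Require Import algC.
From mathcomp Require Import ring.
Import Order.TTheory GRing.Theory Num.Theory.
Local Open Scope ring_scope.
Set Implicit Arguments. Unset Strict Implicit. Unset Printing Implicit Defensive.

(* Let A be the adjacency matrix, k the valency, A_i the distance-i matrix,
   and P the polynomial of degree d with P(theta_j) = (-1)^j.  In Lagrange
   form, the leading coefficient of P is the right-hand side of the
   hypothesis, i.e. n / pi_0 with pi_0 = prod_(s > 0) (theta_0 - theta_s).
   As k = theta_0 and k-eigenvectors are constant,
   prod_(s > 0) (A - theta_s) = (pi_0 / n) J, so P(A) is 1 on every pair at
   distance d.  But P(A)^2 = I and P(A) is hermitian, so its rows have norm 1:
   P(A) = A_d, and every vertex has a unique antipode.
   From A_d = P(A) and A_(d+1) = 0 the three-term recurrence is run downwards: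
   X p_(i+1) minus multiples of p_(i+2) and p_(i+1) has degree i and gives a
   matrix supported on distance i, and the polynomial of degree <= i giving
   "distance < i + 1" shows that it is constant there.  So each A_i is a
   polynomial of degree i in A, every polynomial in A is a combination of the
   A_i, and the number of neighbours of x at distance c from u, the entry
   (A_c A)_(u x), only depends on dist(u, x). *)

Section Walks.
Variables (n : nat) (adj : rel 'I_n).
Hypothesis adj_connected : connected adj.

Lemma walkP u w k :
  reflect (exists p : seq 'I_n, [/\ size p = k, path adj u p & last u p = w])
          (walk adj u w k).
Proof.
apply: (iffP existsP) => [[p /andP[pp /eqP lp]] | [p [sp pp lp]]].
  by exists (val p); split => //; exact: size_tuple.
have sp' : size p == k by apply/eqP.
by exists (Tuple sp'); rewrite /= pp lp eqxx.
Qed.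

Lemma walk0 u w : walk adj u w 0 = (u == w).
Proof.
apply/walkP/eqP => [[p [sp _ <-]] | ->]; last by exists [::].
by case: p sp.
Qed.

Lemma walkS u w k : walk adj u w k.+1 = [exists z, adj u z && walk adj z w k].
Proof.
apply/walkP/existsP => [[[|z p] [//= [sp] /andP[az pp] lp]]
                       | [z /andP[az /walkP [p [sp pp lp]]]]].
  by exists z; rewrite az; apply/walkP; exists p.
by exists (z :: p); rewrite /= sp az pp lp.
Qed.

Lemma walk_shorten u w k : walk adj u w k -> exists2 j, (j < n)%N & walk adj u w j.
Proof.
move=> /walkP [p [_ pp <-]].
case: (shortenP pp) => p' pp' up' _.
exists (size p').
  have := max_card (mem (u :: p')); rewrite card_ord.
  by move/card_uniqP: up' => -> /=.
by apply/walkP; exists p'.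
Qed.

Lemma dist_le_walk u w k : walk adj u w k -> (dist adj u w <= k)%N.
Proof.
move=> wk; case: (ltnP k n) => kn; last first.
  apply: leq_trans kn; rewrite /dist.
  by have := find_size (walk adj u w) (iota 0 n); rewrite size_iota.
rewrite leqNgt; apply/negP => lt.
by have := before_find 0 lt; rewrite nth_iota // add0n wk.
Qed.

Lemma walk_dist u w : walk adj u w (dist adj u w).
Proof.
have [k wk] := adj_connected u w.
have [j jn wj] := walk_shorten wk.
have hs : has (walk adj u w) (iota 0 n).
  by apply/hasP; exists j => //; rewrite mem_iota.
have := nth_find 0 hs; rewrite /dist nth_iota //.
by have := hs; rewrite has_find size_iota.
Qed.

Lemma distnn u : dist adj u u = 0%N.
Proof. by apply/eqP; rewrite -leqn0; apply: dist_le_walk; rewrite walk0. Qed.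

Lemma dist_eq0 u w : (dist adj u w == 0%N) = (u == w).
Proof.
apply/eqP/eqP => [h | ->]; last exact: distnn.
by have := walk_dist u w; rewrite h walk0 => /eqP.
Qed.

Lemma dist_le_adj u z w : adj u z -> (dist adj u w <= (dist adj z w).+1)%N.
Proof.
move=> az; apply: dist_le_walk; rewrite walkS; apply/existsP; exists z.
by rewrite az walk_dist.
Qed.

Lemma dist_adj_pred u w k :
  dist adj u w = k.+1 -> exists2 z, adj u z & dist adj z w = k.
Proof.
move=> h; have := walk_dist u w; rewrite h walkS => /existsP [z /andP[az wz]].
exists z => //; apply/eqP; rewrite eqn_leq (dist_le_walk wz) /=.
by have := dist_le_adj w az; rewrite h ltnS.
Qed.

Lemma dist_le_diameter u w : (dist adj u w <= diameter adj)%N.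
Proof. exact: leq_trans (leq_bigmax (F := dist adj u) w) (leq_bigmax u). Qed.

Lemma dist_intermediate x v m j :
  dist adj x v = m -> (j <= m)%N -> exists y, dist adj y v = j.
Proof.
elim: m x => [|m IH] x h jm.
  by exists x; move: jm; rewrite leqn0 => /eqP ->.
case: (ltnP j m.+1) => jm'.
  by have [z _ hz] := dist_adj_pred h; apply: (IH z hz).
by exists x; apply/eqP; rewrite h eqn_leq jm jm'.
Qed.

End Walks.

Lemma sumr_neq0_exists (V : nmodType) (I : finType) (F : I -> V) :
  \sum_i F i != 0 -> exists i, F i != 0.
Proof.
move=> h; apply/existsP; apply: contraR h => /existsPn h.
by rewrite big1 // => i _; apply/eqP; have := h i; rewrite negbK.
Qed.

Section HornerMx.
Variables (R : comNzRingType) (n' : nat) (A : 'M[R]_n'.+1).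
Implicit Type p : {poly R}.

Lemma horner_mx_sum p : horner_mx A p = \sum_(i < size p) p`_i *: A ^+ i.
Proof.
rewrite -[p in horner_mx A p]coefK poly_def rmorph_sum; apply: eq_bigr => i _.
rewrite -mul_polyC rmorphM /= horner_mx_C rmorphXn /= horner_mx_X.
exact: mul_scalar_mx.
Qed.

Lemma horner_mx_tr p : A^T = A -> (horner_mx A p)^T = horner_mx A p.
Proof.
move=> A_tr; elim/poly_ind: p => [|p c IH]; first by rewrite rmorph0 trmx0.
rewrite rmorphD rmorphM /= horner_mx_X horner_mx_C linearD /= tr_scalar_mx.
by rewrite [X in X + _]trmx_mul IH A_tr (comm_mx_horner p (comm_mx_refl A)).
Qed.

Lemma horner_mx_eigenvector p (v : 'cV_n'.+1) a :
  A *m v = a *: v -> horner_mx A p *m v = p.[a] *: v.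
Proof.
move=> Av; elim/poly_ind: p => [|p c IH].
  by rewrite rmorph0 mul0mx horner0 scale0r.
rewrite rmorphD rmorphM /= horner_mx_X horner_mx_C mulmxDl -mulmxA Av.
rewrite -scalemxAr IH scalerA mul_scalar_mx hornerE scalerDl.
by rewrite hornerMX hornerC mulrC.
Qed.

End HornerMx.

Section HermitianSpectrum.
Variables (n' : nat) (A : 'M[algC]_n'.+1) (I : Type) (theta : I -> algC).
Hypothesis A_herm : A \is hermsymmx.
Hypothesis spectrum_theta : forall a, eigenvalue A a -> exists i, a = theta i.
Local Notation M := (spectralmx A).
Local Notation D := (spectral_diag A).
Implicit Type p : {poly algC}.

Lemma hermitian_spectral_decomposition : A = invmx M *m diag_mx D *m M.
Proof. exact/orthomx_spectralP/hermitian_normalmx. Qed.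

Lemma spectral_diag_eigenvalue j : eigenvalue A (D 0 j).
Proof.
have MA : M *m A = diag_mx D *m M.
  rewrite [X in M *m X]hermitian_spectral_decomposition !mulmxA.
  by rewrite mulmxV ?spectral_unit // mul1mx.
apply/eigenvalueP; exists (row j M).
  by rewrite -row_mul MA mul_diag_mx; apply/rowP => k; rewrite !mxE.
apply/negP => /eqP h.
have := congr1 (fun B => (B *m invmx M) 0 j) h.
rewrite mul0mx -row_mul mulmxV ?spectral_unit // !mxE eqxx.
by move/eqP; rewrite oner_eq0.
Qed.

Lemma horner_mx_spectral p :
  horner_mx A p = invmx M *m diag_mx (map_mx (horner p) D) *m M.
Proof.
rewrite [X in horner_mx X]hermitian_spectral_decomposition.
by rewrite horner_mx_uconjC ?spectral_unit // horner_mx_diag.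
Qed.

Lemma horner_mx_eq0_spectrum p : (forall i, p.[theta i] = 0) -> horner_mx A p = 0.
Proof.
move=> p_theta; rewrite horner_mx_spectral.
have -> : map_mx (horner p) D = 0.
  apply/rowP => j; rewrite !mxE.
  by have [i ->] := spectrum_theta (spectral_diag_eigenvalue j); rewrite p_theta.
by rewrite (_ : diag_mx 0 = 0) ?mulmx0 ?mul0mx //; apply/matrixP => i j; rewrite !mxE mul0rn.
Qed.

Lemma horner_mx_adjoint p : (forall i, p.[theta i] \is Num.real) ->
  forall u v, horner_mx A p u v = (horner_mx A p v u)^*.
Proof.
move=> p_real u v; rewrite horner_mx_spectral invmx_unitary ?spectral_unitarymx //.
rewrite !mxE rmorph_sum; apply: eq_bigr => k _.
rewrite !mul_mx_diag !mxE !rmorphM /= conjCK.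
have [i ->] := spectrum_theta (spectral_diag_eigenvalue k).
by rewrite (conj_Creal (p_real i)); ring.
Qed.

End HermitianSpectrum.

Section AdjacencyAlgebra.
Variables (n' : nat) (adj : rel 'I_n'.+1).
Local Notation n := n'.+1.
Local Notation A := (adjmx adj).
Local Notation dist := (dist adj).
Implicit Type p : {poly algC}.

Definition distmx (j : nat) : 'M[algC]_n := \matrix_(u, v) (dist u v == j)%:R.

Definition distltmx (j : nat) : 'M[algC]_n := \matrix_(u, v) (dist u v < j)%:R.

Definition nbr_count u x c := #|[set z | adj x z & dist u z == c]|.

Lemma adjmx_exp_walk k u v : (A ^+ k) u v != 0 -> walk adj u v k.
Proof.
elim: k u => [|k IH] u.
  by rewrite expr0 mxE walk0; case: (u == v) => //; rewrite mulr0n eqxx.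
rewrite exprS mxE => /sumr_neq0_exists [z]; rewrite mxE.
case az: (adj u z); last by rewrite mul0r eqxx.
by rewrite mul1r => /IH wz; rewrite walkS; apply/existsP; exists z; rewrite az.
Qed.

Lemma horner_mx_adj_far p u v : (size p <= dist u v)%N -> horner_mx A p u v = 0.
Proof.
move=> sp; rewrite horner_mx_sum summxE big1 // => i _.
have far : (i < dist u v)%N := leq_trans (ltn_ord i) sp.
rewrite mxE; apply/eqP; rewrite mulf_eq0; apply/orP; right; apply: contraLR far.
by rewrite -leqNgt => /adjmx_exp_walk /dist_le_walk.
Qed.

Hypothesis adj_sym : forall x y, adj x y = adj y x.
Hypothesis adj_connected : connected adj.

Lemma adjmx_tr : A^T = A.
Proof. by apply/matrixP => i j; rewrite !mxE adj_sym. Qed.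

Lemma adjmx_herm : A \is hermsymmx.
Proof.
apply/is_hermitianmxP; rewrite expr0 scale1r.
by apply/matrixP => i j; rewrite !mxE conjC_nat adj_sym.
Qed.

Lemma nbr_count_mx u x c : (nbr_count u x c)%:R = (distmx c *m A) u x :> algC.
Proof.
rewrite /nbr_count -sum1_card natr_sum mxE big_mkcond /=.
apply: eq_bigr => z _; rewrite !mxE inE adj_sym.
by case: (adj z x); case: (dist u z == c); rewrite ?mulr0 ?mulr1.
Qed.

Lemma adj_distmx_supp j u v : (A *m distmx j) u v != 0 -> (j <= (dist u v).+1)%N.
Proof.
rewrite mxE => /sumr_neq0_exists [z]; rewrite !mxE.
case az: (adj u z); last by rewrite mul0r eqxx.
case: (dist z v =P j) => [<- _ | _]; last by rewrite mulr0 eqxx.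
by apply: (dist_le_adj adj_connected); rewrite adj_sym.
Qed.

Lemma adj_distmx_neq0 j u' u v :
  adj u' u -> dist u v = j -> (A *m distmx j) u' v != 0.
Proof.
move=> au hu; rewrite mxE (bigD1 u) //= !mxE au hu eqxx mulr1.
apply: lt0r_neq0; rewrite ltr_pwDl ?ltr01 //.
by apply: sumr_ge0 => z _; rewrite !mxE; apply: mulr_ge0; rewrite ler0n.
Qed.

End AdjacencyAlgebra.

Section Regular.
Variables (n' : nat) (adj : rel 'I_n'.+1) (k : nat).
Local Notation n := n'.+1.
Local Notation A := (adjmx adj).
Hypothesis adj_sym : forall x y, adj x y = adj y x.
Hypothesis adj_connected : connected adj.
Hypothesis adj_regular : forall x, #|[set y | adj x y]| = k.

Lemma adjmx_row_sum x : \sum_j A x j = k%:R.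
Proof.
rewrite -(adj_regular x) (eq_bigr (fun j => if adj x j then 1 else 0)); last first.
  by move=> j _; rewrite mxE; case: (adj x j).
by rewrite -big_mkcond /= sumr_const cardsE.
Qed.

Lemma adjmx_col_sum j : \sum_i A i j = k%:R.
Proof. by rewrite -(adjmx_row_sum j); apply: eq_bigr => i _; rewrite !mxE adj_sym. Qed.

Lemma adjmx_mul_ones : A *m (const_mx 1 : 'cV_n) = k%:R *: const_mx 1.
Proof.
apply/colP => i; rewrite mxE [RHS]mxE [const_mx 1 i 0]mxE mulr1.
rewrite -(adjmx_row_sum i); apply: eq_bigr => j _.
by rewrite [const_mx 1 j 0]mxE mulr1.
Qed.

Lemma eigenvalue_valency : eigenvalue A k%:R.
Proof.
apply/eigenvalueP; exists (const_mx 1).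
  apply/rowP => j; rewrite mxE [RHS]mxE [const_mx 1 0 j]mxE mulr1.
  rewrite -(adjmx_col_sum j); apply: eq_bigr => i _.
  by rewrite [const_mx 1 0 i]mxE mul1r.
by apply/eqP => /rowP /(_ ord0); rewrite !mxE => /eqP; rewrite oner_eq0.
Qed.

Lemma adjmx_dirichlet (v : 'rV_n) lam : v *m A = lam *: v ->
  \sum_i \sum_j A i j * ((v 0 i - v 0 j) * (v 0 i - v 0 j)^*)
  = 2%:R * (k%:R - lam) * \sum_i v 0 i * (v 0 i)^*.
Proof.
move=> hv.
have ev j : \sum_i v 0 i * A i j = lam * v 0 j.
  by have := congr1 (fun B : 'rV_n => B 0 j) hv; rewrite !mxE.
set S := \sum_i v 0 i * (v 0 i)^*.
have e1 : \sum_i \sum_j A i j * (v 0 i * (v 0 i)^*) = k%:R * S.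
  rewrite /S big_distrr /=; apply: eq_bigr => i _.
  by rewrite -big_distrl /= adjmx_row_sum.
have e2 : \sum_i \sum_j A i j * (v 0 j * (v 0 j)^*) = k%:R * S.
  rewrite exchange_big /S big_distrr /=; apply: eq_bigr => j _.
  by rewrite -big_distrl /= adjmx_col_sum.
have e3 : \sum_i \sum_j A i j * (v 0 i * (v 0 j)^*) = lam * S.
  rewrite exchange_big /S big_distrr /=; apply: eq_bigr => j _.
  rewrite (eq_bigr (fun i => (v 0 i * A i j) * (v 0 j)^*)); last by move=> i _; ring.
  by rewrite -big_distrl /= ev mulrA.
have e4 : \sum_i \sum_j A i j * (v 0 j * (v 0 i)^*) = lam * S.
  rewrite /S big_distrr /=; apply: eq_bigr => i _.
  rewrite (eq_bigr (fun j => (v 0 j * A j i) * (v 0 i)^*)); last first.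
    by move=> j _; rewrite [A j i]mxE [A i j]mxE adj_sym; ring.
  by rewrite -big_distrl /= ev mulrA.
rewrite (eq_bigr (fun i => \sum_j A i j * (v 0 i * (v 0 i)^*)
   + \sum_j A i j * (v 0 j * (v 0 j)^*) - \sum_j A i j * (v 0 i * (v 0 j)^*)
   - \sum_j A i j * (v 0 j * (v 0 i)^*))); last first.
  move=> i _; rewrite -!big_split -!sumrB /=; apply: eq_bigr => j _.
  by rewrite rmorphB /=; ring.
by rewrite !sumrB big_split /= e1 e2 e3 e4; ring.
Qed.

Lemma dirichlet_term_ge0 (v : 'rV_n) i j :
  0 <= A i j * ((v 0 i - v 0 j) * (v 0 i - v 0 j)^*).
Proof. by apply: mulr_ge0; [rewrite mxE ler0n | exact: mul_conjC_ge0]. Qed.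

Lemma dirichlet_ge0 (v : 'rV_n) :
  0 <= \sum_i \sum_j A i j * ((v 0 i - v 0 j) * (v 0 i - v 0 j)^*).
Proof. by do 2!apply: sumr_ge0 => ? _; exact: dirichlet_term_ge0. Qed.

Lemma eigenvalue_le_valency (v : 'rV_n) lam :
  v *m A = lam *: v -> v != 0 -> lam <= k%:R.
Proof.
move=> hv vn0.
have S_gt0 : 0 < \sum_i v 0 i * (v 0 i)^*.
  have [j vj] : exists j, v 0 j != 0.
    apply/existsP; apply: contraR vn0 => /existsPn h.
    by apply/eqP/rowP => j; rewrite [RHS]mxE; have := h j; rewrite negbK => /eqP.
  rewrite (bigD1 j) //= ltr_pwDl //.
    by rewrite lt_def mul_conjC_eq0 vj mul_conjC_ge0.
  by apply: sumr_ge0 => i _; exact: mul_conjC_ge0.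
have := dirichlet_ge0 v.
by rewrite (adjmx_dirichlet hv) pmulr_lge0 // pmulr_rge0 ?ltr0n // subr_ge0.
Qed.

Lemma valency_eigenvector_const (v : 'rV_n) :
  v *m A = k%:R *: v -> forall i j, v 0 i = v 0 j.
Proof.
move=> hv.
have E0 := adjmx_dirichlet hv; rewrite subrr mulr0 mul0r in E0.
have adj_eq i j : adj i j -> v 0 i = v 0 j.
  move=> aij.
  have row0 := psumr_eq0P (fun i' _ => sumr_ge0 _ (fun j' _ => dirichlet_term_ge0 v i' j'))
    E0 (i := i) isT.
  have := psumr_eq0P (fun j' _ => dirichlet_term_ge0 v i j') row0 (i := j) isT.
  by rewrite mxE aij mul1r => /eqP; rewrite mul_conjC_eq0 subr_eq0 => /eqP.
move=> i j; have [m wm] := adj_connected i j.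
elim: m i wm => [|m IH] i; first by rewrite walk0 => /eqP ->.
rewrite walkS => /existsP [z /andP [az wz]].
by rewrite (adj_eq _ _ az) (IH _ wz).
Qed.

End Regular.

Lemma size_poly_leq_coef (R : nzRingType) (q : {poly R}) m :
  (size q <= m.+1)%N -> q`_m = 0 -> (size q <= m)%N.
Proof.
move=> h1 h2; case: (ltnP m (size q)) => // h3.
have e : size q = m.+1 by apply/eqP; rewrite eqn_leq h1 h3.
have : lead_coef q = 0 by rewrite lead_coefE e.
by move/eqP; rewrite lead_coef_eq0 => /eqP q0; rewrite q0 size_poly0 in e.
Qed.

Lemma size_sub_lead (R : fieldType) (r q : {poly R}) m :
  (size r <= m.+1)%N -> size q = m.+1 -> (size (r - (r`_m / q`_m) *: q)%R <= m)%N.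
Proof.
move=> hr hq; apply: size_poly_leq_coef.
  rewrite (leq_trans (size_polyD _ _)) // size_polyN geq_max hr.
  by rewrite (leq_trans (size_scale_leq _ _)) ?hq.
have qm : q`_m != 0.
  by have := lead_coef_eq0 q; rewrite lead_coefE hq /= => ->; rewrite -size_poly_eq0 hq.
by rewrite coefB coefZ divfK // subrr.
Qed.

Section SpectrallyExtremal.
Variables (n' d : nat) (adj : rel 'I_n'.+1) (theta : 'I_d.+1 -> algC) (k : nat).
Local Notation n := n'.+1.
Hypothesis adj_sym : forall x y, adj x y = adj y x.
Hypothesis adj_connected : connected adj.
Hypothesis adj_regular : forall x, #|[set y | adj x y]| = k.
Hypothesis diameter_d : diameter adj = d.
Hypothesis theta_decr : forall i j : 'I_d.+1, (i < j)%N -> theta j < theta i.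
Hypothesis spectrum_theta : forall a, eigenvalue (adjmx adj) a <-> exists i, a = theta i.
Hypothesis ecc_d : forall u, ecc adj u = d.
Hypothesis excess_identity :
  n%:R * \prod_(s < d.+1 | s != ord0) (theta ord0 - theta s)^-1
  = \sum_(r < d.+1) (-1) ^+ r * \prod_(s < d.+1 | s != r) (theta r - theta s)^-1.
Local Notation A := (adjmx adj).
Local Notation hA := (horner_mx A).
Local Notation dist := (dist adj).
Local Notation distmx := (distmx adj).
Local Notation distltmx := (distltmx adj).

Let spectrum_sub a : eigenvalue A a -> exists i, a = theta i :=
  proj1 (spectrum_theta a).

Let hA_eq0 := horner_mx_eq0_spectrum (adjmx_herm adj_sym) spectrum_sub.

Definition lagrange_num (r : 'I_d.+1) : {poly algC} :=
  \prod_(s < d.+1 | s != r) ('X - (theta s)%:P).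

Definition alt_weight (r : 'I_d.+1) : algC :=
  (-1) ^+ r * \prod_(s < d.+1 | s != r) (theta r - theta s)^-1.

Definition alt_poly : {poly algC} := \sum_r alt_weight r *: lagrange_num r.

Definition alt_lead : algC := \sum_r alt_weight r.

Definition pi0 : algC := \prod_(s < d.+1 | s != ord0) (theta ord0 - theta s).

Definition spectrum_poly : {poly algC} := \prod_(s < d.+1) ('X - (theta s)%:P).

Lemma horner_spectrum_poly : hA spectrum_poly = 0.
Proof.
apply: hA_eq0 => j; rewrite horner_prod (bigD1 j) //=.
by rewrite hornerXsubC subrr mul0r.
Qed.

Lemma size_spectrum_poly : size spectrum_poly = d.+2.
Proof.
rewrite size_prod_XsubC; congr (_.+1).
by rewrite -[RHS](card_ord d.+1) cardT enumT.
Qed.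

Lemma theta_neq i j : i != j -> theta i != theta j.
Proof.
move=> nij; case: (ltngtP i j) => h.
- by have := theta_decr h; rewrite lt_def => /andP[].
- by have := theta_decr h; rewrite lt_def eq_sym => /andP[].
- by move: nij; rewrite (val_inj h) eqxx.
Qed.

Lemma prod_theta_neq0 r : \prod_(s < d.+1 | s != r) (theta r - theta s) != 0.
Proof. by apply/prodf_neq0 => s hs; rewrite subr_eq0 theta_neq // eq_sym. Qed.

Lemma horner_lagrange_num r j : (lagrange_num r).[theta j] =
  if j == r then \prod_(s < d.+1 | s != r) (theta r - theta s) else 0.
Proof.
rewrite /lagrange_num horner_prod; case: eqP => [-> | /eqP hj].
  by apply: eq_bigr => s _; rewrite hornerXsubC.
by rewrite (bigD1 j) //= hornerXsubC subrr mul0r.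
Qed.

Lemma size_lagrange_num r : size (lagrange_num r) = d.+1.
Proof.
rewrite /lagrange_num -big_filter size_prod_XsubC size_filter; congr (_.+1).
transitivity #|predC1 r|; last by rewrite cardC1 card_ord.
by rewrite cardE /enum_mem size_filter.
Qed.

Lemma alt_poly_theta j : alt_poly.[theta j] = (-1) ^+ j.
Proof.
rewrite /alt_poly horner_sum (bigD1 j) //= big1 ?addr0; last first.
  by move=> r hr; rewrite hornerZ horner_lagrange_num eq_sym (negPf hr) mulr0.
rewrite hornerZ horner_lagrange_num eqxx /alt_weight prodfV -mulrA mulVf ?mulr1 //.
exact: prod_theta_neq0.
Qed.

Lemma size_alt_poly_sub_lead : (size (alt_poly - alt_lead *: lagrange_num ord0)%R <= d)%N.
Proof.
rewrite /alt_poly /alt_lead scaler_suml -sumrB.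
apply: (big_ind (fun q : {poly algC} => size q <= d)%N); first by rewrite size_poly0.
  by move=> x y hx hy; rewrite (leq_trans (size_polyD _ _)) // geq_max hx hy.
move=> r _; rewrite -scalerBr (leq_trans (size_scale_leq _ _)) //.
apply: size_poly_leq_coef.
  by rewrite (leq_trans (size_polyD _ _)) // size_polyN !size_lagrange_num maxnn.
have /monicP : lagrange_num r \is monic by exact: monic_prod_XsubC.
have /monicP : lagrange_num ord0 \is monic by exact: monic_prod_XsubC.
rewrite !lead_coefE !size_lagrange_num /= => e0 er.
by rewrite coefB er e0 subrr.
Qed.

Lemma pi0_neq0 : pi0 != 0.
Proof. exact: prod_theta_neq0. Qed.

Lemma alt_leadE : alt_lead = n%:R / pi0.
Proof. by rewrite /alt_lead /alt_weight -excess_identity prodfV. Qed.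

Lemma theta0_valency : theta ord0 = k%:R.
Proof.
have [r hr] : exists r, k%:R = theta r.
  by apply/spectrum_theta; exact: eigenvalue_valency adj_sym adj_regular.
apply/eqP; rewrite eq_le; apply/andP; split.
  have /eigenvalueP [v hv vn0] : eigenvalue A (theta ord0) by apply/spectrum_theta; exists ord0.
  exact: (eigenvalue_le_valency adj_sym adj_regular hv vn0).
rewrite hr; case: (posnP r) => [r0 | r_gt0]; first by rewrite (_ : r = ord0) //; apply: val_inj.
by rewrite le_eqVlt (theta_decr (i := ord0) r_gt0) orbT.
Qed.

(* The rows of hA (lagrange_num ord0) are k-eigenvectors, hence constant; by
   symmetry the matrix is constant, and A 1 = k 1 fixes the constant. *)
Lemma horner_lagrange_num0 u v : hA (lagrange_num ord0) u v = pi0 / n%:R.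
Proof.
set Z := hA (lagrange_num ord0).
have ZA : Z *m A = k%:R *: Z.
  have : hA (('X - (theta ord0)%:P) * lagrange_num ord0) = 0.
    apply: hA_eq0 => j; rewrite hornerM hornerXsubC horner_lagrange_num.
    by case: eqP => [-> | _]; rewrite ?subrr ?mul0r ?mulr0.
  rewrite rmorphM rmorphB /= horner_mx_X horner_mx_C /= => /eqP.
  rewrite mulrBl subr_eq0 => /eqP AZ.
  by rewrite -(comm_mx_horner _ (comm_mx_refl A)) -theta0_valency -mul_scalar_mx.
have row_const u' i j : Z u' i = Z u' j.
  have hr : row u' Z *m A = k%:R *: row u' Z.
    by rewrite -row_mul ZA; apply/rowP => l; rewrite !mxE.
  by have := valency_eigenvector_const adj_sym adj_connected adj_regular hr i j; rewrite !mxE.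
have Z_sym u' v' : Z u' v' = Z v' u'.
  have := horner_mx_tr (lagrange_num ord0) (adjmx_tr adj_sym).
  by move/matrixP/(_ v' u'); rewrite mxE.
have Z_const u' v' : Z u' v' = Z ord0 ord0.
  by rewrite (row_const u' v' ord0) Z_sym (row_const ord0 u' ord0).
have := congr1 (fun B : 'cV_n => B ord0 ord0)
  (horner_mx_eigenvector (lagrange_num ord0) (adjmx_mul_ones adj_regular)).
rewrite !mxE (eq_bigr (fun _ => Z ord0 ord0)); last by move=> j _; rewrite mxE mulr1 Z_const.
rewrite sumr_const card_ord -theta0_valency horner_lagrange_num eqxx mulr1 => h.
by rewrite Z_const /pi0 -h -[Z ord0 ord0 *+ n]mulr_natr mulfK // pnatr_eq0.
Qed.

Lemma dist_le_d u v : (dist u v <= d)%N.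
Proof. by rewrite -diameter_d dist_le_diameter. Qed.

Lemma alt_poly_lead_part :
  hA (alt_lead *: lagrange_num ord0) = const_mx 1.
Proof.
apply/matrixP => u v; rewrite linearZ /= !mxE horner_lagrange_num0 alt_leadE.
by rewrite mulrA divfK ?pi0_neq0 // mulfV // pnatr_eq0.
Qed.

Lemma alt_poly_dist_d u v : dist u v = d -> hA alt_poly u v = 1.
Proof.
move=> h; rewrite -(subrK (alt_lead *: lagrange_num ord0) alt_poly) rmorphD /= mxE.
by rewrite horner_mx_adj_far ?h ?size_alt_poly_sub_lead // alt_poly_lead_part mxE add0r.
Qed.

Lemma alt_poly_sqr : hA alt_poly * hA alt_poly = 1.
Proof.
apply/eqP; rewrite -subr_eq0 -rmorphM -(rmorph1 hA) -rmorphB; apply/eqP/hA_eq0 => j.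
rewrite hornerD hornerN hornerM alt_poly_theta hornerC -exprD addnn -mul2n exprM.
by rewrite sqrrN expr1n expr1n subrr.
Qed.

Lemma alt_poly_adjoint u v : hA alt_poly u v = (hA alt_poly v u)^*.
Proof.
apply: (horner_mx_adjoint (adjmx_herm adj_sym) spectrum_sub) => i.
by rewrite alt_poly_theta rpredX // rpredN rpred1.
Qed.

Lemma alt_poly_row_norm u : \sum_v hA alt_poly u v * (hA alt_poly u v)^* = 1.
Proof.
have := congr1 (fun B : 'M[algC]_n => B u u) alt_poly_sqr.
rewrite [X in _ = X -> _]mxE eqxx mulr1n !mxE => <-.
by apply: eq_bigr => v _; rewrite [hA alt_poly v u]alt_poly_adjoint.
Qed.

Lemma alt_poly_off_antipode u v0 v : dist u v0 = d -> v != v0 -> hA alt_poly u v = 0.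
Proof.
move=> uv0 vv0.
have := alt_poly_row_norm u; rewrite (bigD1 v0) //= alt_poly_dist_d // rmorph1 mulr1.
rewrite -[X in _ = X]addr0 => /addrI h.
have := psumr_eq0P (fun v' _ => mul_conjC_ge0 (hA alt_poly u v')) h (i := v) vv0.
by move/eqP; rewrite mul_conjC_eq0 => /eqP.
Qed.

Lemma exists_antipode u : exists v, dist u v = d.
Proof.
have [v h] := @bigop.eq_bigmax _ (dist u) (ltac:(by rewrite card_ord)).
by exists v; rewrite -h -(ecc_d u).
Qed.

Lemma alt_poly_distmx : hA alt_poly = distmx d.
Proof.
apply/matrixP => u v; rewrite mxE; case: eqP => [h | h]; first exact: alt_poly_dist_d.
have [v0 uv0] := exists_antipode u.
by apply: (alt_poly_off_antipode uv0); apply: contra_notN h => /eqP ->.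
Qed.

Lemma antipode_uniq u v1 v2 : dist u v1 = d -> dist u v2 = d -> v1 = v2.
Proof.
move=> h1 h2; apply/eqP; rewrite eq_sym; apply/negPn/negP => hn.
by have := alt_poly_off_antipode h1 hn; rewrite alt_poly_dist_d // => /eqP; rewrite oner_eq0.
Qed.

Lemma exists_adj_dist_pair j : (j < d)%N ->
  exists u' u v, [/\ adj u' u, dist u' v = j & dist u v = j.+1].
Proof.
move=> jd; have [v h] := exists_antipode ord0.
have [u hu] := dist_intermediate adj_connected h jd.
have [u' au hu'] := dist_adj_pred adj_connected hu.
by exists u', u, v; rewrite adj_sym.
Qed.

Definition distance_polys j (p q s : {poly algC}) :=
  [/\ size p = j.+1, size q = j.+2 & (size s <= j)%N] /\
  [/\ hA p = distmx j, hA q = distmx j.+1 & hA s = distltmx j].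

Lemma distance_polys_d :
  distance_polys d alt_poly spectrum_poly (alt_lead *: lagrange_num ord0 - alt_poly).
Proof.
have alt_lead_neq0 : alt_lead != 0.
  by rewrite alt_leadE mulf_neq0 ?invr_eq0 ?pi0_neq0 ?pnatr_eq0.
split; split.
- rewrite -(subrK (alt_lead *: lagrange_num ord0) alt_poly) addrC size_polyDl.
    by rewrite size_scale ?size_lagrange_num.
  by rewrite size_scale ?size_lagrange_num // ltnS size_alt_poly_sub_lead.
- exact: size_spectrum_poly.
- by rewrite -opprB size_polyN size_alt_poly_sub_lead.
- exact: alt_poly_distmx.
- apply/matrixP => u v; rewrite horner_spectrum_poly !mxE.
  by rewrite (@ltn_eqF _ d.+1) // ltnS dist_le_d.
- apply/matrixP => u v; rewrite rmorphB /= alt_poly_lead_part alt_poly_distmx !mxE.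
  have := dist_le_d u v; rewrite leq_eqVlt; case/orP => [/eqP -> | h].
    by rewrite eqxx ltnn subrr.
  by rewrite h ltn_eqF // subr0.
Qed.

Lemma recurrence_poly i (p q : {poly algC}) : size p = i.+2 -> size q = i.+3 ->
  hA p = distmx i.+1 -> hA q = distmx i.+2 ->
  exists2 g : {poly algC}, (size g <= i.+1)%N &
    forall u v, hA g u v = (dist u v == i)%:R * (A *m distmx i.+1) u v.
Proof.
move=> sp sq hp hq.
set b := ('X * p)`_(i.+2) / q`_(i.+2).
have sXp : (size ('X * p - b *: q)%R <= i.+2)%N.
  apply: size_sub_lead => //.
  by rewrite (leq_trans (size_polyMleq _ _)) // size_polyX sp.
set a := ('X * p - b *: q)`_(i.+1) / p`_(i.+1).
have g_entry u v : hA ('X * p - b *: q - a *: p) u v = (A *m distmx i.+1) u v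
    - b * (dist u v == i.+2)%:R - a * (dist u v == i.+1)%:R.
  by rewrite !rmorphB /= !linearZ /= rmorphM /= horner_mx_X hp hq !mxE !mulrN.
exists ('X * p - b *: q - a *: p); first exact: size_sub_lead.
move=> u v; case: (ltngtP (dist u v) i) => h.
- rewrite g_entry !ltn_eqF ?(ltn_trans h) //.
  have -> : (A *m distmx i.+1) u v = 0.
    apply/eqP; apply: contraTT h => /(adj_distmx_supp adj_sym adj_connected).
    by rewrite ltnS -leqNgt.
  by rewrite !mulr0 !subr0.
- rewrite horner_mx_adj_far ?mul0r //.
  exact: leq_trans (size_sub_lead sXp sp) h.
by rewrite g_entry h !ltn_eqF // !mulr0 !subr0 mul1r.
Qed.

(* The recurrence gives a polynomial g of degree i supported on distance i;
   comparing it with the polynomial s of "distance < i + 1" shows that g is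
   constant on that support. *)
Lemma distance_polys_pred i (p q s : {poly algC}) : (i < d)%N ->
  distance_polys i.+1 p q s -> exists p' s', distance_polys i p' p s'.
Proof.
move=> id [[sp sq ss] [hp hq hs]].
have [g sg hg] := recurrence_poly sp sq hp hq.
have [u' [u [v [au hu' hu]]]] := exists_adj_dist_pair id.
have gi : g`_i != 0.
  apply/negP => /eqP gi0.
  have := @horner_mx_adj_far _ adj g u' v; rewrite hu' => /(_ (size_poly_leq_coef sg gi0)).
  rewrite hg hu' eqxx mul1r => /eqP; apply/negP.
  exact: (adj_distmx_neq0 au hu).
have sgi : size g = i.+1.
  by apply/eqP; rewrite eqn_leq sg ltnNge; apply: contra gi => h; rewrite nth_default.
set beta := s`_i / g`_i.
have ss' : (size (s - beta *: g)%R <= i)%N by apply: size_sub_lead.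
have beta_g x y : dist x y = i -> beta * hA g x y = 1.
  move=> h; have := @horner_mx_adj_far _ adj (s - beta *: g) x y.
  rewrite h => /(_ ss').
  rewrite rmorphB /= linearZ /= hs !mxE h ltnSn /= => /eqP.
  by rewrite subr_eq0 => /eqP <-.
have beta_neq0 : beta != 0.
  by apply: contra_eqN (beta_g _ _ hu') => /eqP ->; rewrite mul0r eq_sym oner_eq0.
have h_beta_g : hA (beta *: g) = distmx i.
  apply/matrixP => x y; rewrite linearZ /= !mxE.
  have [h | h] := eqVneq (dist x y) i; first by rewrite beta_g // h eqxx.
  by rewrite hg (negPf h) mul0r mulr0.
exists (beta *: g), (s - beta *: g); split; split => //.
- by rewrite size_scale.
- apply/matrixP => x y; rewrite rmorphB /= hs h_beta_g !mxE.
  case: (ltngtP (dist x y) i) => h.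
  + by rewrite (ltn_trans h (ltnSn i)) subr0.
  + by rewrite ltnS leqNgt h subr0.
  + by rewrite h ltnSn subrr.
Qed.

Lemma distance_polys_exist j : (j <= d)%N -> exists p q s, distance_polys j p q s.
Proof.
move=> jd; rewrite -(subKn jd); elim: (d - j)%N (leq_subr j d) => [_ | t IH td].
  by rewrite subn0; do 3!eexists; exact: distance_polys_d.
have [p [q [s]]] := IH (ltnW td); rewrite -subnSK //.
have lt_d : (d - t.+1 < d)%N by rewrite subnSK // leq_subr.
by case/(distance_polys_pred lt_d) => p' [s' hps]; exists p', p, s'.
Qed.

Lemma horner_mx_dist_fun_size m (g : {poly algC}) : (m <= d.+1)%N -> (size g <= m)%N ->
  exists phi : nat -> algC, forall u v, hA g u v = phi (dist u v).
Proof.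
elim: m g => [g _ | m IH g md sg].
  rewrite leqn0 size_poly_eq0 => /eqP ->; exists (fun=> 0) => u v.
  by rewrite rmorph0 mxE.
have [p [q [s [[sp _ _] [hp _ _]]]]] := distance_polys_exist md.
have [phi hphi] := IH _ (ltnW md) (size_sub_lead sg sp).
exists (fun j => phi j + g`_m / p`_m * (j == m)%:R) => u v.
by rewrite -hphi rmorphB /= linearZ /= hp !mxE subrK.
Qed.

Lemma horner_mx_dist_fun (g : {poly algC}) :
  exists phi : nat -> algC, forall u v, hA g u v = phi (dist u v).
Proof.
have hs : (size (g %% spectrum_poly)%R <= d.+1)%N.
  by rewrite -ltnS -size_spectrum_poly ltn_modp -size_poly_eq0 size_spectrum_poly.
have [phi hphi] := horner_mx_dist_fun_size (leqnn d.+1) hs.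
exists phi => u v; rewrite -hphi {1}(divp_eq g spectrum_poly).
by rewrite rmorphD rmorphM /= horner_spectrum_poly mulr0 add0r.
Qed.

Lemma distmx_poly c : exists p, hA p = distmx c.
Proof.
case: (leqP c d) => [cd | dc].
  by have [p [q [s [_ [hp _ _]]]]] := distance_polys_exist cd; exists p.
exists 0; apply/matrixP => u v.
by rewrite rmorph0 !mxE (ltn_eqF (leq_ltn_trans (dist_le_d u v) dc)).
Qed.

Lemma dist_sym u v : dist u v = dist v u.
Proof.
have [p hp] := distmx_poly (dist u v).
have := horner_mx_tr p (adjmx_tr adj_sym); rewrite hp => /matrixP/(_ v u).
by rewrite !mxE eqxx; case: eqP => [-> | _] // /eqP; rewrite eqr_nat.
Qed.

Lemma nbr_count_dist u x u' x' c :
  dist u x = dist u' x' -> nbr_count adj u x c = nbr_count adj u' x' c.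
Proof.
move=> h; have [p hp] := distmx_poly c.
have [phi hphi] := horner_mx_dist_fun (p * 'X).
have count_phi y z : (nbr_count adj y z c)%:R = phi (dist y z) :> algC.
  by rewrite (nbr_count_mx adj_sym) -hp -hphi rmorphM /= horner_mx_X.
by apply/eqP; rewrite -(eqr_nat algC) !count_phi h.
Qed.

Lemma distance_regular_graph : distance_regular adj.
Proof.
exists (fun j c => if [pick ux : 'I_n * 'I_n | dist ux.1 ux.2 == j] is Some ux
                  then nbr_count adj ux.1 ux.2 c else 0%N).
move=> u x c; case: pickP => [[u0 x0] /= /eqP h | h].
  by apply: nbr_count_dist; rewrite h.
by have := h (u, x); rewrite /= eqxx.
Qed.

Lemma antipodal_graph : antipodal adj.
Proof.
split; first exact: distance_regular_graph.
rewrite diameter_d => x y z; split; first by rewrite distnn.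
have dist_eq0 := dist_eq0 adj_connected.
case/orP => [/eqP/eqP | /eqP xy]; first by rewrite dist_eq0 => /eqP ->.
apply/idP/idP => /orP [] /eqP h2.
- by move/eqP: h2; rewrite dist_eq0 => /eqP <-; rewrite dist_sym xy eqxx orbT.
- by rewrite -(antipode_uniq xy h2) distnn.
- by move/eqP: h2; rewrite dist_eq0 => /eqP <-; rewrite xy eqxx orbT.
- by rewrite -(antipode_uniq (etrans (dist_sym y x) xy) h2) distnn.
Qed.

End SpectrallyExtremal.

Unset Implicit Arguments.

Theorem corollary3p8 (n d : nat) (adj : rel 'I_n)
  (Hsimple : simple_graph adj) (Hconn : connected adj) (Hreg : regular adj)
  (Hdiam : diameter adj = d)
  (theta : 'I_d.+1 -> algC)
  (Hdecr : forall i j : 'I_d.+1, (i < j)%N -> theta j < theta i)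
  (Hspec : forall a : algC, eigenvalue (adjmx adj) a <-> exists i, a = theta i)
  (Hecc : forall u, ecc adj u = d)
  (Hid : n%:R * \prod_(s < d.+1 | s != ord0) (theta ord0 - theta s)^-1
         = \sum_(r < d.+1) (-1) ^+ r * \prod_(s < d.+1 | s != r) (theta r - theta s)^-1) :
  antipodal adj.
Proof.
case: n adj Hsimple Hconn Hreg Hdiam Hspec Hecc Hid => [|n'] adj [Hsym _] Hconn [k Hk]
  Hdiam Hspec Hecc Hid.
  have /eigenvalueP [v _] : eigenvalue (adjmx adj) (theta ord0) by apply/Hspec; exists ord0.
  by case/negP; apply/eqP/rowP => [[]].
exact: antipodal_graph Hsym Hconn Hk Hdiam Hdecr Hspec Hecc Hid.
Qed.
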